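(* Let $H$ be a real Hilbert space, $C\subset H$ a nonempty closed convex set, and $A,F:H\to H$ operators. (a) Assume that the couple $(A,F)$ is $\gamma$-strongly monotone for some $\gamma>0$, and that $x^*$ is a solution of $\mathrm{GVI}(A,F,C)$. Then for all $f\in C$ and all $y\in H$, $$\langle Fy-f,\,Ay-Ax^*\rangle+\langle f-Fx^*,\,Ay\rangle\ \ge\ \gamma\|y-x^*\|^2 .$$ (b) Assume that the couple $(A,F)$ is monotone. Then $x^*\in H$ is a solution of $\mathrm{GVI}(A,F,C)$ if and only if $Fx^*\in C$ and $$\langle Ay-Ax^*,\,Fy-f\rangle+\langle Ay,\,f-Fx^*\rangle\ \ge\ 0\qquad\text{for all } y\in H,\ f\in C.$$
   Context: The general variational inequality $\mathrm{GVI}(A,F,C)$ is the problem: find $x^*\in H$ such that $Fx^*\in C$ and $\langle Ax^*,y-Fx^*\rangle\ge 0$ for all $y\in C$. A couple $(A,F)$ of operators $H\to H$ is called $\gamma$-strongly monotone ($\gamma>0$) if $\langle Ax-Ay,Fx-Fy\rangle\ge\gamma\|x-y\|^2$ for all $x,y\in H$, and monotone if $\langle Ax-Ay,Fx-Fy\rangle\ge 0$ for all $x,y\in H$. *)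

From HB Require Import structures.
From mathcomp Require Import all_boot all_order all_algebra.
From mathcomp Require Import all_classical all_reals all_analysis.
Set Implicit Arguments. Unset Strict Implicit. Unset Printing Implicit Defensive.
Import Order.TTheory GRing.Theory Num.Theory.
Import numFieldNormedType.Exports.
Local Open Scope classical_set_scope.
Local Open Scope ring_scope.

(* A real Hilbert space is modelled as a complete normed space H over a
   realType R together with a real inner product [ip] inducing its norm. *)
Definition is_inner_product (R : realType) (H : completeNormedModType R)
  (ip : H -> H -> R) : Prop :=
  [/\ (forall x y, ip x y = ip y x),
      (forall a x y z, ip (a *: x + y) z = a * ip x z + ip y z),
      (forall x, 0 <= ip x x),
      (forall x, ip x x = 0 -> x = 0)
    & (forall x, `|x| ^+ 2 = ip x x)].

Definition GVI_sol (R : realType) (H : completeNormedModType R) (ip : H -> H -> R)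
  (A F : H -> H) (C : set H) (xs : H) : Prop :=
  C (F xs) /\ forall y, C y -> 0 <= ip (A xs) (y - F xs).

Definition couple_strongly_monotone (R : realType) (H : completeNormedModType R)
  (ip : H -> H -> R) (A F : H -> H) (gamma : R) : Prop :=
  forall x y, gamma * `|x - y| ^+ 2 <= ip (A x - A y) (F x - F y).

Definition couple_monotone (R : realType) (H : completeNormedModType R)
  (ip : H -> H -> R) (A F : H -> H) : Prop :=
  forall x y, 0 <= ip (A x - A y) (F x - F y).

From HB Require Import structures.
From mathcomp Require Import all_boot all_order all_algebra.
From mathcomp Require Import all_classical all_reals all_analysis.
From mathcomp Require Import lra.
Import Order.TTheory GRing.Theory Num.Theory.
Import numFieldNormedType.Exports.
Local Open Scope classical_set_scope.
Local Open Scope ring_scope.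

(* Expanding both inner products by bilinearity, the left-hand side of (a) equals
   <Ay - Ax*, Fy - Fx*> + <Ax*, f - Fx*>: the first term is at least
   gamma |y - x*|^2 by strong monotonicity and the second is nonnegative because
   x* solves the GVI.  Monotonicity is strong monotonicity with gamma = 0, which
   gives the forward direction of (b); the converse is the case y = x*. *)

Section InnerProduct.
Variables (R : realType) (H : completeNormedModType R) (ip : H -> H -> R).
Hypothesis ip_inner : is_inner_product ip.

Lemma ipC x y : ip x y = ip y x.
Proof. by case: ip_inner. Qed.

Lemma ip_linear a x y z : ip (a *: x + y) z = a * ip x z + ip y z.
Proof. by case: ip_inner. Qed.

Lemma ip0l z : ip 0 z = 0.
Proof. by rewrite -(addNr z) -scaleN1r ip_linear mulN1r addNr. Qed.

Lemma ipNl x z : ip (- x) z = - ip x z.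
Proof. by rewrite -[- x]addr0 -scaleN1r ip_linear ip0l mulN1r addr0. Qed.

Lemma ipBl x y z : ip (x - y) z = ip x z - ip y z.
Proof. by rewrite -{1}[x]scale1r ip_linear ipNl mul1r. Qed.

Lemma ipBr x y z : ip z (x - y) = ip z x - ip z y.
Proof. by rewrite ipC ipBl !(ipC z). Qed.

Lemma ip_gap_expand a b u v w :
  ip (u - w) (a - b) + ip (w - v) a = ip (a - b) (u - v) + ip b (w - v).
Proof. rewrite !ipBl !ipBr !(ipC u) !(ipC w) !(ipC v); lra. Qed.

End InnerProduct.

Arguments ipC {R H ip}.
Arguments ip_gap_expand {R H ip}.

Lemma couple_monotoneE (R : realType) (H : completeNormedModType R)
  (ip : H -> H -> R) (A F : H -> H) :
  couple_monotone ip A F <-> couple_strongly_monotone ip A F 0.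
Proof. by split=> hmono x y; [rewrite mul0r | have := hmono x y; rewrite mul0r]. Qed.

Section GeneralVariationalInequality.
Variables (R : realType) (H : completeNormedModType R) (ip : H -> H -> R).
Variables (A F : H -> H) (C : set H).
Hypothesis ip_inner : is_inner_product ip.

Lemma GVI_sol_gap_ge {gamma : R} {xs : H} :
  couple_strongly_monotone ip A F gamma -> GVI_sol ip A F C xs ->
  forall f y, C f ->
    gamma * `|y - xs| ^+ 2 <= ip (F y - f) (A y - A xs) + ip (f - F xs) (A y).
Proof.
move=> hmono [_ hsol] f y Cf.
rewrite (ip_gap_expand ip_inner).
have := hmono y xs; have := hsol f Cf; lra.
Qed.

Lemma GVI_sol_gap_ge0 (xs : H) :
  couple_monotone ip A F -> GVI_sol ip A F C xs ->
  forall y f, C f -> 0 <= ip (A y - A xs) (F y - f) + ip (A y) (f - F xs).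
Proof.
move=> /couple_monotoneE hmono hsol y f Cf.
rewrite (ipC ip_inner (A y - A xs)) (ipC ip_inner (A y)).
by have := GVI_sol_gap_ge hmono hsol f y Cf; rewrite mul0r.
Qed.

Lemma GVI_sol_of_gap_ge0 (xs : H) :
  C (F xs) ->
  (forall y f, C f -> 0 <= ip (A y - A xs) (F y - f) + ip (A y) (f - F xs)) ->
  GVI_sol ip A F C xs.
Proof.
move=> CFxs hgap; split=> // f Cf.
by have := hgap xs f Cf; rewrite subrr ip0l // add0r.
Qed.

End GeneralVariationalInequality.

Theorem lemma1p1 (R : realType) (H : completeNormedModType R)
  (ip : H -> H -> R) (C : set H) (A F : H -> H) :
  is_inner_product ip ->
  C !=set0 -> closed C -> convex_set C ->
  (forall (gamma : R) (xs : H), 0 < gamma ->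
     couple_strongly_monotone ip A F gamma ->
     GVI_sol ip A F C xs ->
     forall f y, C f ->
       ip (F y - f) (A y - A xs) + ip (f - F xs) (A y) >= gamma * `|y - xs| ^+ 2)
  /\
  (couple_monotone ip A F ->
     forall xs : H,
       GVI_sol ip A F C xs <->
       (C (F xs) /\ forall y f, C f ->
          ip (A y - A xs) (F y - f) + ip (A y) (f - F xs) >= 0)).
Proof.
move=> ip_inner _ _ _; split.
  by move=> gamma xs _; exact: GVI_sol_gap_ge.
move=> hmono xs; split.
  by move=> hsol; split; [case: hsol | exact: GVI_sol_gap_ge0].
by case; exact: GVI_sol_of_gap_ge0.
Qed.
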